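(* Let $\theta$ be a comtrace alphabet. The map $\mathsf{dep2lct}:\mathsf{CDG}(\theta)\to\mathsf{LCT}(\theta)$, $D\mapsto D^\lozenge$, is injective: if $D_1,D_2\in\mathsf{CDG}(\theta)$ and $D_1^\lozenge=D_2^\lozenge$, then $D_1=D_2$.
   Context: Labeled relational structures $(X,P,Q,\lambda)$ are considered up to label-preserving isomorphism (bijections preserving/reflecting $P$ and $Q$ and preserving labels). $\lozenge$-closure: $(X,R_1,R_2)^\lozenge:=(X,(R_1\cup R_2)^*\circ R_1\circ(R_1\cup R_2)^*,(R_1\cup R_2)^*\setminus\mathrm{id}_X)$ ($^*$ = reflexive transitive closure), with labels unchanged. So-structures: $(X,\prec,\sqsubset)$ with (S1) $\neg(\alpha\sqsubset\alpha)$; (S2) $\alpha\prec\beta\Rightarrow\alpha\sqsubset\beta$; (S3) $\alpha\sqsubset\beta\sqsubset\gamma\wedge\alpha\neq\gamma\Rightarrow\alpha\sqsubset\gamma$; (S4) $(\alpha\sqsubset\beta\prec\gamma)\vee(\alpha\prec\beta\sqsubset\gamma)\Rightarrow\alpha\prec\gamma$. Quotient: $\alpha\equiv_\sqsubset\beta$ iff $\alpha=\beta$ or ($\alpha\sqsubset\beta\wedge\beta\sqsubset\alpha$); classes $[\alpha]$; $[\alpha]\hat\prec[\beta]$ iff $[\alpha]\neq[\beta]$ and $([\alpha]\times[\beta])\cap\prec\neq\emptyset$; $\hat\sqsubset$ likewise. $R^{\mathrm{cov}}:=\{(x,y):xRy\wedge\neg\exists z(xRz\wedge zRy)\}$. Comtrace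 alphabet: $\theta=(E,sim,ser)$, $E$ finite, $ser\subseteq sim\subseteq E\times E$, $sim$ irreflexive symmetric. Lsos-comtrace over $\theta$: the class of a finite labeled so-structure $(X,\prec,\sqsubset,\lambda)$, $\lambda:X\to E$, such that for all $\alpha\neq\beta$: (LC1) $[\alpha]((\hat\sqsubset)^{\mathrm{cov}}\cap\hat\prec)[\beta]\Rightarrow\lambda[[\alpha]]\times\lambda[[\beta]]\not\subseteq ser$; (LC2) $[\alpha]((\hat\sqsubset)^{\mathrm{cov}}\setminus\hat\prec)[\beta]\Rightarrow\lambda[[\beta]]\times\lambda[[\alpha]]\not\subseteq ser$; (LC3) for nonempty $A,B\subseteq[\alpha]$ with $A\cup B=[\alpha]$, $\lambda[A]\times\lambda[B]\not\subseteq ser$; (LC4) $(\lambda\alpha,\lambda\beta)\notin ser\Rightarrow\alpha\prec\beta\vee\beta\sqsubset\alpha$; (LC5) $(\lambda\alpha,\lambda\beta)\notin sim\Rightarrow\alpha\prec\beta\vee\beta\prec\alpha$. $\mathsf{LCT}(\theta)$ is the set of these. Cd-graph over $\theta$: the class of a finite labeled relational structure $(X,\to,\dashrightarrow,\lambda)$, $\lambda:X\to E$, with $\to,\dashrightarrow$ irreflexive, $(X,\to,\dashrightarrow)^\lozenge$ an so-structure, and for all $\alpha\neq\beta$: (CD1) $(\lambda\alpha,\lambda\beta)\notin sim\Rightarrow\alpha\to\beta\vee\beta\to\alpha$; (CD2) $(\lambda\alpha,\lambda\beta)\notin ser\Rightarrow\alpha\to\beta\vee\beta\dashrightarrow\alpha$;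 (CD3) $\alpha\to\beta\Rightarrow(\lambda\alpha,\lambda\beta)\notin ser$; (CD4) $\alpha\dashrightarrow\beta\Rightarrow(\lambda\beta,\lambda\alpha)\notin ser$. $\mathsf{CDG}(\theta)$ is the set of these; $D^\lozenge$ is an lsos-comtrace for $D\in\mathsf{CDG}(\theta)$. *)

From mathcomp Require Import all_boot.
Set Implicit Arguments. Unset Strict Implicit. Unset Printing Implicit Defensive.

Definition comtrace_alphabet (E : finType) (sim ser : rel E) : Prop :=
  (forall a b, ser a b -> sim a b) /\
  (forall a, ~~ sim a a) /\
  (forall a b, sim a b = sim b a).

Definition relU (X : finType) (R1 R2 : rel X) : rel X :=
  fun x y => R1 x y || R2 x y.

(* Diamond closure:
   (X,R1,R2)^◇ = (X, (R1∪R2)^* ∘ R1 ∘ (R1∪R2)^*, (R1∪R2)^* \ id_X),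
   where ^* is reflexive transitive closure (connect). *)
Definition diamond1 (X : finType) (R1 R2 : rel X) : rel X :=
  fun x y => [exists u, exists v,
      [&& connect (relU R1 R2) x u, R1 u v & connect (relU R1 R2) v y]].

Definition diamond2 (X : finType) (R1 R2 : rel X) : rel X :=
  fun x y => connect (relU R1 R2) x y && (x != y).

Definition so_structure (X : finType) (prec sqsub : rel X) : Prop :=
  (forall a, ~~ sqsub a a) /\
  (forall a b, prec a b -> sqsub a b) /\
  (forall a b c, sqsub a b -> sqsub b c -> a != c -> sqsub a c) /\
  (forall a b c, (sqsub a b && prec b c) || (prec a b && sqsub b c) -> prec a c).

Definition cd_graph (E : finType) (sim ser : rel E)
    (X : finType) (arr darr : rel X) (lam : X -> E) : Prop :=
  (forall a, ~~ arr a a) /\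
  (forall a, ~~ darr a a) /\
  so_structure (diamond1 arr darr) (diamond2 arr darr) /\
  (forall a b, a != b -> ~~ sim (lam a) (lam b) -> arr a b \/ arr b a) /\
  (forall a b, a != b -> ~~ ser (lam a) (lam b) -> arr a b \/ darr b a) /\
  (forall a b, a != b -> arr a b -> ~~ ser (lam a) (lam b)) /\
  (forall a b, a != b -> darr a b -> ~~ ser (lam b) (lam a)).

(* Label-preserving isomorphism of labeled relational structures
   (X1,P1,Q1,l1) and (X2,P2,Q2,l2). Structures are considered up to such
   isomorphisms, so equality of classes means existence of one. *)
Definition lrs_iso (E : finType)
    (X1 : finType) (P1 Q1 : rel X1) (l1 : X1 -> E)
    (X2 : finType) (P2 Q2 : rel X2) (l2 : X2 -> E) : Prop :=
  exists f : X1 -> X2,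
    bijective f /\
    (forall x y, P2 (f x) (f y) = P1 x y) /\
    (forall x y, Q2 (f x) (f y) = Q1 x y) /\
    (forall x, l2 (f x) = l1 x).

From mathcomp Require Import all_boot.

Set Implicit Arguments.
Unset Strict Implicit.
Unset Printing Implicit Defensive.

(* In a cd-graph the arrows are recovered from the diamond closure and the
   labels: [a -> b] iff [a] precedes [b] in the closure and their labels are
   not serialisable in that order, and dually for [-->].  An isomorphism of
   the closures that preserves labels therefore preserves both arrows. *)

Lemma so_mixed_cycle (X : finType) (prec sqsub : rel X) a b :
  so_structure prec sqsub ->
  (sqsub a b && prec b a) || (prec a b && sqsub b a) -> False.
Proof.
move=> [sqsub_irr [prec_sqsub [_ so_comp]]] /so_comp /prec_sqsub.
by rewrite (negbTE (sqsub_irr a)).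
Qed.

Lemma diamond1_sub (X : finType) (arr darr : rel X) a b :
  arr a b -> diamond1 arr darr a b.
Proof.
by move=> ab; apply/existsP; exists a; apply/existsP; exists b; rewrite ab !connect0.
Qed.

Lemma diamond2_sub (X : finType) (arr darr : rel X) a b :
  relU arr darr a b -> a != b -> diamond2 arr darr a b.
Proof. by move=> ab neq_ab; rewrite /diamond2 connect1. Qed.

Section CdGraphArrows.

Variables (E : finType) (sim ser : rel E).
Variables (X : finType) (arr darr : rel X) (l : X -> E).
Hypothesis cdG : cd_graph sim ser arr darr l.

Lemma cd_graph_arrE a b : arr a b = diamond1 arr darr a b && ~~ ser (l a) (l b).
Proof.
have [arr_irr [_ [so [_ [cd2 [cd3 _]]]]]] := cdG.
apply/idP/andP => [ab | [ab nser_ab]].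
  have neq_ab : a != b by apply: contraTneq ab => ->; exact: arr_irr.
  by rewrite diamond1_sub // cd3.
have neq_ab : a != b.
  apply: contraTneq ab => ->; have [sqsub_irr [prec_sqsub _]] := so.
  by apply: contraNN (sqsub_irr b); apply: prec_sqsub.
case: (cd2 a b neq_ab nser_ab) => // ba; exfalso.
have sqsub_ba : diamond2 arr darr b a.
  by apply: diamond2_sub; [apply/orP; right | rewrite eq_sym].
by apply: (@so_mixed_cycle _ _ _ a b so); rewrite ab sqsub_ba orbT.
Qed.

Lemma cd_graph_darrE a b :
  darr a b = diamond2 arr darr a b && ~~ ser (l b) (l a).
Proof.
have [_ [darr_irr [so [_ [cd2 [_ cd4]]]]]] := cdG.
apply/idP/andP => [ab | [ab nser_ba]].
  have neq_ab : a != b by apply: contraTneq ab => ->; exact: darr_irr.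
  by rewrite diamond2_sub ?cd4 //= /relU ab orbT.
have neq_ba : b != a by rewrite eq_sym; case/andP: ab.
case: (cd2 b a neq_ba nser_ba) => // ba; exfalso.
by apply: (@so_mixed_cycle _ _ _ a b so); rewrite ab diamond1_sub.
Qed.

End CdGraphArrows.

Theorem mainTheorem11 (E : finType) (sim ser : rel E)
    (Htheta : comtrace_alphabet sim ser)
    (X1 : finType) (arr1 darr1 : rel X1) (l1 : X1 -> E)
    (X2 : finType) (arr2 darr2 : rel X2) (l2 : X2 -> E) :
  cd_graph sim ser arr1 darr1 l1 ->
  cd_graph sim ser arr2 darr2 l2 ->
  lrs_iso (diamond1 arr1 darr1) (diamond2 arr1 darr1) l1
          (diamond1 arr2 darr2) (diamond2 arr2 darr2) l2 ->
  lrs_iso arr1 darr1 l1 arr2 darr2 l2.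
Proof.
move=> G1 G2 [f [bij_f [f_prec [f_sqsub f_lab]]]].
exists f; split=> //; split; last split=> //.
- by move=> x y; rewrite (cd_graph_arrE G1) (cd_graph_arrE G2) f_prec !f_lab.
- by move=> x y; rewrite (cd_graph_darrE G1) (cd_graph_darrE G2) f_sqsub !f_lab.
Qed.
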